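(* Let $\Gamma$ be a finite graph and let $z\in H^1(\Gamma,\mathbb{Z})$ be nonzero. Then $z$ is a coedge, i.e. $z=\pm e^*$ for some edge $e$ of $\Gamma$, if and only if $z(c)\in\{+1,0,-1\}$ for every $(0,1)$-cycle $c$ of $\Gamma$.
   Context: Edges of $\Gamma$ are oriented; $H_1(\Gamma,\mathbb{Z})\subset\bigoplus\mathbb{Z}e_i$ is the cycle group and $H^1(\Gamma,\mathbb{Z})$ its dual (cokernel of the coboundary $C^0\to\bigoplus\mathbb{Z}e_i^*$); the image of $e_i^*$ in $H^1$ is the coedge $e_i^*$ (up to sign, depending on the chosen orientation). A $(0,1)$-cycle is a cycle in which every edge appears with coefficient in $\{+1,0,-1\}$, i.e. a sum of simple cycles with pairwise disjoint edge supports. *)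

From HB Require Import structures.
From mathcomp Require Import all_boot all_order all_algebra.
Set Implicit Arguments. Unset Strict Implicit. Unset Printing Implicit Defensive.
Import Order.TTheory GRing.Theory Num.Theory.
Local Open Scope ring_scope.

(* A finite (multi)graph with oriented edges: finite vertex type V, finite
   edge type E, each edge e goes from [src e] to [tgt e] (loops and parallel
   edges allowed). *)
Record graph := Graph {
  vert : finType;
  edge : finType;
  src : edge -> vert;
  tgt : edge -> vert }.

(* 1-chains / 1-cochains: integer-valued functions on edges. *)
Definition chain (G : graph) := edge G -> int.

Definition boundary (G : graph) (c : chain G) (v : vert G) : int :=
  \sum_(e | tgt e == v) c e - \sum_(e | src e == v) c e.

(* c is a cycle, i.e. an element of H_1(G, Z) *)
Definition is_cycle (G : graph) (c : chain G) : Prop :=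
  forall v, boundary c v = 0.

Definition zero_one_cycle (G : graph) (c : chain G) : Prop :=
  is_cycle c /\ forall e, c e \in [:: 1; 0; -1].

Definition coboundary (G : graph) (g : vert G -> int) : chain G :=
  fun e => g (tgt e) - g (src e).

(* H^1(G,Z) = Z^E / image of coboundary. A class z is represented by a
   cochain f; two cochains represent the same class iff they differ by a
   coboundary. *)
Definition cohomologous (G : graph) (f f' : chain G) : Prop :=
  exists g : vert G -> int, forall e, f e - f' e = coboundary g e.

Definition class_zero (G : graph) (f : chain G) : Prop :=
  cohomologous f (fun _ => 0).

Definition coedge_cochain (G : graph) (e0 : edge G) : chain G :=
  fun e => if e == e0 then 1 else 0.

Definition is_coedge (G : graph) (f : chain G) : Prop :=
  exists (e0 : edge G) (s : int), s \in [:: 1; -1] /\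
    cohomologous f (fun e => s * coedge_cochain e0 e).

(* evaluation z(c) of the class of f on a chain c (well defined on cycles) *)
Definition pairing (G : graph) (f c : chain G) : int :=
  \sum_e f e * c e.

From mathcomp Require Import all_boot all_order all_algebra.
From mathcomp Require Import zify ring.
Set Implicit Arguments. Unset Strict Implicit. Unset Printing Implicit Defensive.
Import Order.TTheory GRing.Theory Num.Theory.
Local Open Scope ring_scope.

(* Pairing a cochain h with a (0,1)-cycle gives at most |h|_1 = sum_e |h e|.
   Within the class of f one can always reach a representative h for which
   this bound is attained by some (0,1)-cycle c; then |h|_1 = h(c) is 0 or 1,
   which forces h to be 0 or +-e^*.  Attainment is a max-flow/min-cut
   argument: if c disagrees in sign with h on an edge e0, either an augmenting
   path in the residual graph closes e0 into a (0,1)-cycle with larger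
   pairing, or the set of vertices reachable from the head of e0 is a cut,
   and subtracting the coboundary of its indicator strictly decreases |h|_1. *)

Lemma sum_mul_eq (R : pzRingType) (T : finType) (F : T -> R) (w : T) :
  \sum_v F v * (w == v)%:R = F w.
Proof.
rewrite (bigD1 w) //= eqxx mulr1 big1 ?addr0 // => v /negbTE.
by rewrite eq_sym => ->; rewrite mulr0.
Qed.

Section Chains.
Variable G : graph.
Implicit Types (c h f P : chain G) (g : vert G -> int).

Definition norm1 h : int := \sum_e `|h e|.

Lemma norm1_ge0 h : 0 <= norm1 h.
Proof. exact: sumr_ge0. Qed.

Definition incidence (e : edge G) (v : vert G) : int :=
  (tgt e == v)%:R - (src e == v)%:R.

Lemma boundaryE c v : boundary c v = \sum_e incidence e v * c e.
Proof.
rewrite /boundary (big_mkcond (fun e => tgt e == v)) (big_mkcond (fun e => src e == v)).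
rewrite -sumrB; apply: eq_bigr => e _; rewrite /incidence.
by case: (tgt e == v); case: (src e == v); rewrite /= ?mul1r ?mul0r ?subr0 ?sub0r ?subrr ?mulN1r.
Qed.

Lemma boundaryD c c' v :
  boundary (fun e => c e + c' e) v = boundary c v + boundary c' v.
Proof. by rewrite !boundaryE -big_split; apply: eq_bigr => e _; rewrite mulrDr. Qed.

Lemma boundaryZ s c v : boundary (fun e => s * c e) v = s * boundary c v.
Proof. by rewrite !boundaryE big_distrr; apply: eq_bigr => e _; rewrite mulrCA. Qed.

Lemma boundary_coedge e0 v : boundary (coedge_cochain e0) v = incidence e0 v.
Proof.
rewrite boundaryE (eq_bigr (fun e => incidence e v * (e0 == e)%:R)) ?sum_mul_eq //.
by move=> e _; rewrite /coedge_cochain eq_sym; case: (e0 == e).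
Qed.

Lemma boundary_add_coedge P s e v :
  boundary (fun e' => P e' + s * coedge_cochain e e') v =
  boundary P v + s * incidence e v.
Proof. by rewrite boundaryD boundaryZ boundary_coedge. Qed.

Lemma pairing_coedge s e0 c :
  pairing (fun e => s * coedge_cochain e0 e) c = s * c e0.
Proof.
rewrite /pairing (eq_bigr (fun e => s * c e * (e0 == e)%:R)) ?sum_mul_eq //.
by move=> e _; rewrite /coedge_cochain eq_sym; case: (e0 == e); rewrite ?mulr1 ?mulr0 ?mul0r.
Qed.

Lemma pairing_coboundary g c : is_cycle c -> pairing (coboundary g) c = 0.
Proof.
move=> cyc_c.
have -> : pairing (coboundary g) c = \sum_v g v * boundary c v.
  under [RHS]eq_bigr => v _ do rewrite boundaryE big_distrr.
  rewrite exchange_big; apply: eq_bigr => e _ /=.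
  under eq_bigr => v _ do rewrite /incidence mulrA mulrBr mulrBl.
  by rewrite sumrB -!big_distrl /= !sum_mul_eq mulrBl.
by rewrite big1 // => v _; rewrite cyc_c mulr0.
Qed.

Lemma cohomologous_refl f : cohomologous f f.
Proof. by exists (fun _ => 0) => e; rewrite /coboundary !subrr. Qed.

Lemma cohomologous_trans f f' f'' :
  cohomologous f f' -> cohomologous f' f'' -> cohomologous f f''.
Proof.
move=> [g fg] [g' fg']; exists (fun v => g v + g' v) => e.
by have := fg e; have := fg' e; rewrite /coboundary; lia.
Qed.

Lemma cohomologous_eqfun f f' : f =1 f' -> cohomologous f f'.
Proof. by move=> ff'; exists (fun _ => 0) => e; rewrite ff' /coboundary !subrr. Qed.

Lemma pairing_cohomologous f f' c :
  cohomologous f f' -> is_cycle c -> pairing f c = pairing f' c.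
Proof.
move=> [g fg] cyc_c; apply/eqP; rewrite -subr_eq0 -(pairing_coboundary g cyc_c).
by rewrite /pairing -sumrB; apply/eqP/eq_bigr => e _; rewrite -mulrBl fg.
Qed.

Lemma zero_one_cycle0 : zero_one_cycle (fun _ : edge G => 0 : int).
Proof.
split=> [v|e]; last by rewrite !inE eqxx orbT.
by rewrite boundaryE big1 // => e _; rewrite mulr0.
Qed.

Lemma zero_one_cycleN c : zero_one_cycle c -> zero_one_cycle (fun e => - c e).
Proof.
move=> [cyc_c c01]; split=> [v|e]; last by have := c01 e; rewrite !inE; lia.
rewrite boundaryE; under eq_bigr => e _ do rewrite mulrN.
by rewrite sumrN -boundaryE cyc_c oppr0.
Qed.

Lemma pairing_le_norm1 h c : zero_one_cycle c -> pairing h c <= norm1 h.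
Proof.
move=> [_ c01]; apply: ler_sum => e _; have := c01 e; rewrite !inE.
by case/or3P => /eqP ->; lia.
Qed.

Lemma norm1_eq0 h : norm1 h = 0 -> h =1 (fun _ => 0).
Proof.
move=> h0 e; have /eqP := psumr_eq0P (fun e _ => normr_ge0 (h e)) h0 (i := e) isT.
by rewrite normr_eq0 => /eqP.
Qed.

Lemma norm1_eq1 h : norm1 h = 1 ->
  exists e0 s, s \in [:: 1; -1] /\ h =1 (fun e => s * coedge_cochain e0 e).
Proof.
move=> h1; have [e0 he0] : exists e0, h e0 != 0.
  apply/existsP; apply: contraT; rewrite negb_exists => /forallP h_eq0.
  move: h1; rewrite /norm1 big1 // => e _.
  by have /negPn/eqP -> := h_eq0 e; rewrite normr0.
move: h1; rewrite /norm1 (bigD1 e0) //=; set rest := \sum_(i | _) _ => h1.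
have rest_ge0 : 0 <= rest by apply: sumr_ge0 => e _.
have rest_eq0 : rest = 0 by lia.
exists e0, (h e0); split; first by rewrite !inE; lia.
move=> e; rewrite /coedge_cochain; have [->|ne] := eqVneq e e0; first by rewrite mulr1.
have /eqP := psumr_eq0P (fun e _ => normr_ge0 (h e)) rest_eq0 ne.
by rewrite normr_eq0 mulr0 => /eqP.
Qed.

Section AugmentOrCut.
Variables (h c : chain G) (e0 : edge G).

Definition forward_ok e := (c e < 1) && (0 <= h e).
Definition backward_ok e := (-1 < c e) && (h e <= 0).

Definition residual : rel (vert G) := fun a b =>
  [exists e, (e != e0) && ((src e == a) && (tgt e == b) && forward_ok e
                           || (tgt e == a) && (src e == b) && backward_ok e)].

Definition augmenting P := P e0 = 0 /\ forall e,
  P e = 0 \/ (P e = 1 /\ forward_ok e) \/ (P e = -1 /\ backward_ok e).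

Lemma residual_path_chain x p :
  path residual x p -> uniq (x :: p) ->
  exists P, [/\ augmenting P,
    forall v, boundary P v = (last x p == v)%:R - (x == v)%:R
    & forall e, P e != 0 -> (src e \in x :: p) && (tgt e \in x :: p)].
Proof.
elim: p x => [|y p IH] x /=.
  move=> _ _; exists (fun _ => 0); split=> [|v|e]; last by rewrite eqxx.
    by split=> // e; left.
  by rewrite subrr boundaryE big1 // => e _; rewrite mulr0.
case/andP=> /existsP [e /andP [ne0 xy]] yp /andP [xNp uniq_p].
have [P [[P0 augP] bdP suppP]] := IH y yp uniq_p.
have Pe : P e = 0.
  apply/eqP; apply: contraT => /suppP /andP [se te].
  by case/orP: xy => /andP [/andP [/eqP xe _] _]; rewrite -xe ?se ?te in xNp.
have step (s : int) : (s = 1 /\ forward_ok e \/ s = -1 /\ backward_ok e) ->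
    (forall v, s * incidence e v = (y == v)%:R - (x == v)%:R) ->
    exists P', [/\ augmenting P',
      forall v, boundary P' v = (last y p == v)%:R - (x == v)%:R
      & forall e, P' e != 0 -> (src e \in x :: y :: p) && (tgt e \in x :: y :: p)].
  move=> s_ok inc_e; exists (fun e' => P e' + s * coedge_cochain e e'); split.
  - split; first by rewrite /coedge_cochain eq_sym (negbTE ne0) P0 mulr0 addr0.
    move=> e'; rewrite /coedge_cochain; have [->|ne] := eqVneq e' e.
      by rewrite Pe add0r mulr1; right; case: s_ok => [[-> ?]|[-> ?]]; [left|right].
    by rewrite mulr0 addr0; apply: augP.
  - by move=> v; rewrite boundary_add_coedge bdP inc_e; ring.
  - move=> e'; rewrite /coedge_cochain; have [-> _|ne] := eqVneq e' e.
      case/orP: xy => /andP [/andP [/eqP <- /eqP <-] _]; by rewrite !inE !eqxx ?orbT.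
    by rewrite mulr0 addr0 => /suppP /andP [se te]; rewrite inE se inE te !orbT.
case/orP: xy => /andP [/andP [/eqP xe /eqP ye] e_ok].
- by apply: (step 1); [left | move=> v; rewrite mul1r /incidence xe ye].
- by apply: (step (-1)); [right | move=> v; rewrite /incidence xe ye; ring].
Qed.

Hypotheses (c01 : zero_one_cycle c) (h_e0 : 0 < h e0) (c_e0 : c e0 <= 0).

Lemma augmenting_cycle : connect residual (tgt e0) (src e0) ->
  exists c', zero_one_cycle c' /\ pairing h c < pairing h c'.
Proof.
case/connectP=> p0 p0_path; case: (shortenP p0_path) => p p_path p_uniq _ p_last.
have [P [[P0 augP] bdP _]] := residual_path_chain p_path p_uniq.
have [cyc_c c_val] := c01.
exists (fun e => (c e + P e) + 1 * coedge_cochain e0 e); split; first split.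
- by move=> v; rewrite boundary_add_coedge boundaryD cyc_c bdP -p_last /incidence; ring.
- move=> e; have := c_val e; rewrite /coedge_cochain !inE.
  have [->|ne] := eqVneq e e0; first by rewrite P0 /= mulr1 addr0; lia.
  rewrite mulr0 addr0 /forward_ok /backward_ok.
  by case: (augP e) => [->|[[-> /andP []]|[-> /andP []]]]; lia.
- rewrite /pairing; under [X in _ < X]eq_bigr => e _ do rewrite !mulrDr.
  rewrite !big_split /=.
  have -> : \sum_e h e * (1 * coedge_cochain e0 e) = h e0.
    by rewrite -[RHS]mul1r -pairing_coedge; apply: eq_bigr => e _; rewrite mulrC.
  have gain_ge0 : 0 <= \sum_e h e * P e.
    apply: sumr_ge0 => e _; rewrite /forward_ok /backward_ok.
    by case: (augP e) => [->|[[-> /andP []]|[-> /andP []]]]; lia.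
  by rewrite -addrA ltrDl; apply: ltr_wpDl gain_ge0 h_e0.
Qed.

Lemma cut_decreases_norm1 : ~~ connect residual (tgt e0) (src e0) ->
  exists h', cohomologous h h' /\ norm1 h' < norm1 h.
Proof.
move=> no_path; have [cyc_c c_val] := c01.
pose R := connect residual (tgt e0); pose g v : int := (R v)%:R.
exists (fun e => h e - coboundary g e); split.
  by exists g => e; rewrite opprB addrC subrK.
have R_fwd e : e != e0 -> R (src e) -> forward_ok e -> R (tgt e).
  move=> ne Rs ok; apply: (connect_trans Rs); apply: connect1.
  by apply/existsP; exists e; rewrite ne !eqxx ok.
have R_bwd e : e != e0 -> R (tgt e) -> backward_ok e -> R (src e).
  move=> ne Rt ok; apply: (connect_trans Rt); apply: connect1.
  by apply/existsP; exists e; rewrite ne !eqxx ok orbT.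
have R_tgt : R (tgt e0) by apply: connect0.
have R_src : R (src e0) = false by apply/negbTE.
(* Every edge other than e0 crossing the cut is saturated in the direction of
   h, so its term drops by at least -(coboundary g e * c e); e0 drops by one
   more. *)
have drop e : `|h e - coboundary g e| - `|h e| <=
    - (coboundary g e * c e) - (e == e0)%:R.
  rewrite /coboundary /g; have := c_val e; rewrite !inE.
  have [->|ne] := eqVneq e e0; first by rewrite R_tgt R_src /=; lia.
  have := R_fwd e ne; have := R_bwd e ne; rewrite /forward_ok /backward_ok.
  by case: (R (src e)); case: (R (tgt e)) => /=; lia.
have := ler_sum (index_enum (edge G)) (P := xpredT) (fun e _ => drop e).
rewrite !sumrB sumrN -/(pairing (coboundary g) c) pairing_coboundary // oppr0 sub0r.
have -> : \sum_e ((e == e0)%:R : int) = 1.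
  by rewrite -[RHS](sum_mul_eq (fun=> 1) e0); apply: eq_bigr => e _; rewrite mul1r eq_sym.
by rewrite /norm1 -subr_lt0 => /le_lt_trans; apply; rewrite ltrN10.
Qed.

Lemma augment_or_cut :
  (exists c', zero_one_cycle c' /\ pairing h c < pairing h c') \/
  (exists h', cohomologous h h' /\ norm1 h' < norm1 h).
Proof.
have [path_ex|no_path] := boolP (connect residual (tgt e0) (src e0)).
  by left; apply: augmenting_cycle.
by right; apply: cut_decreases_norm1.
Qed.

End AugmentOrCut.

Lemma norm1N h : norm1 (fun e => - h e) = norm1 h.
Proof. by apply: eq_bigr => e _; rewrite normrN. Qed.

Lemma pairingNN h c : pairing (fun e => - h e) (fun e => - c e) = pairing h c.
Proof. by apply: eq_bigr => e _; rewrite mulrNN. Qed.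

Lemma pairingNl h c : pairing (fun e => - h e) c = pairing h (fun e => - c e).
Proof. by apply: eq_bigr => e _; rewrite mulrN mulNr. Qed.

Lemma cohomologousN f f' :
  cohomologous f f' -> cohomologous (fun e => - f e) (fun e => - f' e).
Proof.
move=> [g fg]; exists (fun v => - g v) => e.
by have := fg e; rewrite /coboundary; lia.
Qed.

Lemma improve_pairing_or_norm1 h c : zero_one_cycle c -> pairing h c < norm1 h ->
  (exists c', zero_one_cycle c' /\ pairing h c < pairing h c') \/
  (exists h', cohomologous h h' /\ norm1 h' < norm1 h).
Proof.
move=> c01 lt_hc; have [e lt_e] : exists e, h e * c e < `|h e|.
  apply/existsP; apply: contraTT lt_hc; rewrite negb_exists -leNgt => /forallP ge_all.
  by apply: ler_sum => e _; rewrite leNgt; apply: ge_all.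
have := c01.2 e; rewrite !inE => c_e.
have sign_e : 0 < h e /\ c e <= 0 \/ 0 < - h e /\ - c e <= 0.
  by case/or3P: c_e => /eqP c_e; rewrite c_e ?mulr1 ?mulr0 ?mulrN1 in lt_e *; lia.
case: sign_e => [[h_pos c_npos]|[h_neg c_nneg]].
  exact: augment_or_cut c01 h_pos c_npos.
have [[c' [c'01 lt_c']]|[h' [hh' lt_h']]] :=
  augment_or_cut (h := fun e => - h e) (zero_one_cycleN c01) h_neg c_nneg.
  left; exists (fun e => - c' e); split; first exact: zero_one_cycleN.
  by rewrite -pairingNl -(pairingNN h c).
right; exists (fun e => - h' e); split; last by rewrite norm1N -(norm1N h).
by apply: cohomologous_trans (cohomologousN hh'); apply: cohomologous_eqfun => e'; rewrite opprK.
Qed.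

Lemma norm1_attained_or_decreases h :
  (exists c, zero_one_cycle c /\ pairing h c = norm1 h) \/
  (exists h', cohomologous h h' /\ norm1 h' < norm1 h).
Proof.
suff attain n c : zero_one_cycle c -> (absz (norm1 h - pairing h c) < n)%N ->
    (exists c', zero_one_cycle c' /\ pairing h c' = norm1 h) \/
    (exists h', cohomologous h h' /\ norm1 h' < norm1 h).
  exact: attain _ _ zero_one_cycle0 (ltnSn _).
elim: n c => [//|n IH] c c01 gap_c.
have [eq_hc|ne_hc] := eqVneq (pairing h c) (norm1 h); first by left; exists c.
have lt_hc : pairing h c < norm1 h by rewrite lt_neqAle ne_hc pairing_le_norm1.
case: (improve_pairing_or_norm1 c01 lt_hc) => [[c' [c'01 lt_c']]|]; last by right.
by apply: (IH c' c'01); have := pairing_le_norm1 h c'01; lia.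
Qed.

Lemma exists_norm1_attained f :
  exists h, cohomologous f h /\ exists c, zero_one_cycle c /\ pairing h c = norm1 h.
Proof.
suff attain n : forall f', cohomologous f f' -> (absz (norm1 f') < n)%N ->
    exists h, cohomologous f h /\ exists c, zero_one_cycle c /\ pairing h c = norm1 h.
  exact: attain _ f (cohomologous_refl f) (ltnSn _).
elim: n => [//|n IH] f' ff' small_f'.
case: (norm1_attained_or_decreases f') => [attained|[h' [fh' lt_h']]].
  by exists f'.
apply: (IH h' (cohomologous_trans ff' fh')).
by have := norm1_ge0 h'; lia.
Qed.

End Chains.

Theorem lemma5p3 (G : graph) (f : chain G) :
  ~ class_zero f ->
  (is_coedge f <->
   (forall c : chain G, zero_one_cycle c -> pairing f c \in [:: 1; 0; -1])).
Proof.
move=> f_nonzero; split.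
  move=> [e0 [s [s_sign f_coedge]]] c [cyc_c c_val].
  rewrite (pairing_cohomologous f_coedge cyc_c) pairing_coedge.
  by have := c_val e0; move: s_sign; rewrite !inE; case/orP => /eqP ->; lia.
move=> pairing_01.
have [h [fh [c [c01 hc]]]] := exists_norm1_attained f.
have := pairing_01 c c01; rewrite (pairing_cohomologous fh c01.1) hc.
have := norm1_ge0 h; rewrite !inE => norm1_h_ge0 norm1_val.
have [/norm1_eq0 h0|/norm1_eq1 [e0 [s [s_sign h_coedge]]]] : norm1 h = 0 \/ norm1 h = 1 by lia.
  by case: f_nonzero; apply: cohomologous_trans fh (cohomologous_eqfun h0).
by exists e0, s; split=> //; apply: cohomologous_trans fh (cohomologous_eqfun h_coedge).
Qed.
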